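(* Let $S=\{a_i \bmod d_i : 1\le i\le r\}$ be an exact covering system with $r\ge 2$, and let $G_S$ be its exact covering system digraph. Then every (weakly connected) component of $G_S$ contains exactly one directed cycle.
   Context: A system of congruences $S=\{a_i \bmod d_i : 1\le i\le r\}$ with integers $a_i$ and nonzero integers $d_i$ (negative $d_i$ allowed; $n\equiv a \bmod -d$ means $n\equiv a\bmod d$) is an exact covering system if every integer satisfies exactly one of the congruences; congruences are distinguished by their chosen representatives $a_i$. The exact covering system digraph $G_S$ has vertex set $\mathbb{Z}$ and edges $(n,d_in+a_i)$ for all $n\in\mathbb{Z}$, $1\le i\le r$ (loops count as cycles of length one); $r$ is its degree. A component means a connected component of the underlying undirected graph. *)

From mathcomp Require Import all_boot all_algebra.
From Stdlib Require Import Relations.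
Set Implicit Arguments. Unset Strict Implicit. Unset Printing Implicit Defensive.
Import GRing.Theory Num.Theory.
Local Open Scope ring_scope.

(* A system of congruences is a list of pairs (a_i, d_i) : int * int,
   the congruence "n = a_i mod d_i" holding iff d_i divides n - a_i
   (so negative d_i behave like -d_i).  Congruences are indexed by their
   position in the list (distinguished by chosen representatives). *)
Definition congr_holds (n : int) (c : int * int) : bool := (c.2 %| n - c.1)%Z.

Definition exact_covering (S : seq (int * int)) : Prop :=
  all (fun c => c.2 != 0) S /\ forall n : int, count (congr_holds n) S = 1%N.

Definition edge_target (S : seq (int * int)) (e : int * nat) : int :=
  let c := nth (0, 0) S e.2 in c.2 * e.1 + c.1.

Definition ecs_edge (S : seq (int * int)) (n m : int) : Prop :=
  exists2 i : nat, (i < size S)%N & m = edge_target S (n, i).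

Definition ecs_weakly_connected (S : seq (int * int)) : relation int :=
  clos_refl_sym_trans int (ecs_edge S).

(* A directed cycle of G_S, given as the cyclic list of its edges
   (n_0,i_0), ..., (n_{k-1},i_{k-1}), k >= 1 (loops are cycles of length 1),
   with pairwise distinct vertices n_j and the target of edge j being the
   source of edge j+1 (mod k). *)
Definition is_dicycle (S : seq (int * int)) (c : seq (int * nat)) : Prop :=
  [/\ c <> [::], all (fun e => (e.2 < size S)%N) c, uniq (map fst c) &
      forall j : nat, (j < size c)%N ->
        edge_target S (nth (0, 0%N) c j) = (nth (0, 0%N) c (j.+1 %% size c)).1].

From mathcomp Require Import all_boot all_algebra zify.
From Stdlib Require Import Relations.
Import GRing.Theory.
Set Implicit Arguments. Unset Strict Implicit.

(* Exactness means that every integer m lies in exactly one class a_i mod d_i,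
   so m has exactly one incoming edge in G_S, namely from (m - a_i) / d_i.
   Hence G_S read backwards is the graph of a function, and its directed
   cycles read backwards are exactly the cycles of the map sending an edge to
   the edge entering its source.  When r >= 2 no modulus is +-1, so the
   backward map roughly halves absolute values: backward orbits are bounded,
   hence eventually periodic, which yields a cycle in every component.  Two
   vertices are weakly connected iff their backward orbits meet, and two
   cycles of a function sharing a point coincide, which gives uniqueness. *)

Lemma count_eq1_find (T : Type) (P : pred T) (s : seq T) (x0 : T) (i : nat) :
  count P s = 1 -> i < size s -> P (nth x0 s i) -> i = find P s.
Proof.
move=> count1 lt_i_s Pi.
have le_find : find P s <= i.
  by rewrite leqNgt; apply/negP => /(before_find x0); rewrite Pi.
move: le_find; rewrite leq_eqVlt => /orP [/eqP -> // | lt_find].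
have : 0 < count P (take i s).
  by rewrite -has_count has_take ?lt_find //; apply/(has_nthP x0); exists i.
move: count1; rewrite -{1}(cat_take_drop i s) count_cat (drop_nth x0 lt_i_s) /= Pi.
lia.
Qed.

Lemma cycle_nthP (T : Type) (x0 : T) (e : rel T) (p : seq T) :
  reflect (forall j, j < size p -> e (nth x0 p j) (nth x0 p (j.+1 %% size p)))
          (cycle e p).
Proof.
case: p => [|x q] /=; first by left.
have nth_next j : j < (size q).+1 ->
    nth x0 (rcons q x) j = nth x0 (x :: q) (j.+1 %% (size q).+1).
  rewrite ltnS leq_eqVlt nth_rcons => /orP [/eqP -> | lt_jq].
    by rewrite ltnn eqxx modnn.
  by rewrite lt_jq modn_small.
have nth_cur j : j < (size q).+1 -> nth x0 (x :: rcons q x) j = nth x0 (x :: q) j.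
  by rewrite -rcons_cons nth_rcons => ->.
apply: (iffP (pathP x0)) => [e_p j lt_j | e_p j].
  by rewrite -(nth_next j) // -(nth_cur j) //; apply: e_p; rewrite size_rcons.
by rewrite size_rcons => lt_j; rewrite nth_cur // nth_next //; apply: e_p.
Qed.

Section FunctionCycles.

Variables (T : eqType) (f : T -> T).

Lemma iter_mem_fcycle p x k : fcycle f p -> x \in p -> iter k f x \in p.
Proof. by move=> f_p p_x; elim: k => //= k; apply: mem_fcycle. Qed.

Lemma fcycle_mem_iter p x y :
  fcycle f p -> x \in p -> y \in p -> exists k, y = iter k f x.
Proof.
move=> f_p /rot_to [i q rot_p] p_y.
have /fpathE q_traject : fcycle f (x :: q) by rewrite -rot_p rot_cycle.
have : y \in traject f x (size q).+2.
  rewrite trajectS -(size_rcons q x) -q_traject inE mem_rcons -rot_p mem_rot.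
  by rewrite p_y orbT.
by case/trajectP=> k _ ->; exists k.
Qed.

Lemma fcycle_eq_mem p q x :
  fcycle f p -> fcycle f q -> x \in p -> x \in q -> p =i q.
Proof.
have sub r r' : fcycle f r -> fcycle f r' -> x \in r -> x \in r' -> {subset r <= r'}.
  move=> f_r f_r' r_x r'_x y /(fcycle_mem_iter f_r r_x) [k ->].
  exact: iter_mem_fcycle.
by move=> f_p f_q p_x q_x y; apply/idP/idP; apply: sub.
Qed.

Lemma periodic_traject_ufcycle y L :
  0 < L -> iter L f y = y -> (forall k, 0 < k < L -> iter k f y != y) ->
  uniq (traject f y L) /\ fcycle f (traject f y L).
Proof.
case: L => // L _ per minL; split.
  rewrite looping_uniq; apply/negP => /trajectP [i lt_iL eq_i].
  have /minL : 0 < i.+1 < L.+1 by rewrite /= ltnS.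
  by rewrite iterS -eq_i -iterS per eqxx.
by rewrite trajectS /= -{3}per iterSr -trajectSr fpath_traject.
Qed.

Lemma fcycle_of_orbit_repeat x i j :
  i < j -> iter i f x = iter j f x ->
  exists p, [/\ p <> [::], uniq p, fcycle f p, iter i f x \in p &
                forall y, y \in p -> exists k, y = iter k f x].
Proof.
move=> lt_ij eq_ij; set y := iter i f x.
have has_period : exists n, (0 < n) && (iter n f y == y).
  by exists (j - i); rewrite subn_gt0 lt_ij /y -iterD (subnK (ltnW lt_ij)) eq_ij eqxx.
case: (ex_minnP has_period) => L /andP [L_gt0 /eqP perL] minL.
have [uniq_p f_p] : uniq (traject f y L) /\ fcycle f (traject f y L).
  apply: periodic_traject_ufcycle => // k /andP [k_gt0 lt_kL].
  by apply/negP => per_k; have := minL k; rewrite k_gt0 per_k => /(_ isT); lia.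
exists (traject f y L); split => //.
- by case: L L_gt0 {perL minL uniq_p f_p}.
- by case: L L_gt0 {perL minL uniq_p f_p} => // L _; rewrite trajectS mem_head.
- by move=> z /trajectP [k _ ->]; exists (k + i); rewrite iterD.
Qed.

Lemma orbit_in_seq_repeats x (s : seq T) :
  (forall k, iter k f x \in s) -> exists i j, i < j /\ iter i f x = iter j f x.
Proof.
move=> in_s.
have sub_s : {subset traject f x (size s).+1 <= s} by move=> _ /trajectP [k _ ->].
have : ~~ uniq (traject f x (size s).+1).
  by apply/negP => /uniq_leq_size /(_ sub_s); rewrite size_traject ltnn.
rewrite looping_uniq negbK => /trajectP [i lt_i eq_i].
by exists i, (size s).
Qed.

End FunctionCycles.

Lemma bounded_int_orbit_repeats (f : int -> int) x (B : nat) :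
  (forall k, absz (iter k f x) <= B) -> exists i j, i < j /\ iter i f x = iter j f x.
Proof.
move=> bounded.
apply: (orbit_in_seq_repeats (s := [seq (k%:Z - B%:Z)%R | k <- iota 0 (2 * B).+1])) => k.
have := bounded k; move: (iter k f x) => y le_yB.
by apply/mapP; exists (absz (y + B%:Z)%R); rewrite ?mem_iota; lia.
Qed.

Section ExactCoveringDigraph.

Variable S : seq (int * int).
Hypothesis S_exact : exact_covering S.

Definition ecs_index (m : int) : nat := find (congr_holds m) S.

Definition ecs_pred (m : int) : int :=
  let c := nth (0, 0)%R S (ecs_index m) in ((m - c.1) %/ c.2)%Z.

Definition in_edge (m : int) : int * nat := (ecs_pred m, ecs_index m).

Definition pred_edge (e : int * nat) : int * nat := in_edge e.1.

Lemma ecs_index_lt m : ecs_index m < size S.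
Proof. by rewrite /ecs_index -has_find has_count (proj2 S_exact m). Qed.

Lemma congr_holds_ecs_index m : congr_holds m (nth (0, 0)%R S (ecs_index m)).
Proof. by apply: nth_find; rewrite has_count (proj2 S_exact m). Qed.

Lemma modulus_neq0 i : i < size S -> (nth (0, 0)%R S i).2 != 0%R.
Proof. by case: S_exact => /(all_nthP (0, 0)%R) nz_S _ /nz_S. Qed.

Lemma edge_target_in_edge m : edge_target S (in_edge m) = m.
Proof.
have := congr_holds_ecs_index m.
rewrite /edge_target /ecs_pred /congr_holds /=.
by set c := nth _ _ _ => dvd_c; rewrite mulrC divzK // subrK.
Qed.

Lemma in_edge_unique e : e.2 < size S -> e = in_edge (edge_target S e).
Proof.
case: e => n i /= lt_i; set m := edge_target S (n, i).
have congr_i : congr_holds m (nth (0, 0)%R S i).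
  by rewrite /congr_holds /m /edge_target /= addrK; apply/dvdz_mulr/dvdzz.
have e_i : i = ecs_index m := count_eq1_find (proj2 S_exact m) lt_i congr_i.
rewrite /in_edge -e_i; congr (_, _).
apply: (mulfI (modulus_neq0 lt_i)); apply: (addIr (nth (0, 0)%R S i).1).
by have := edge_target_in_edge m; rewrite /edge_target /in_edge /= -e_i => ->.
Qed.

Lemma iter_pred_edge k m : iter k pred_edge (in_edge m) = in_edge (iter k ecs_pred m).
Proof. by elim: k => //= k ->. Qed.

Lemma ecs_edge_pred m : ecs_edge S (ecs_pred m) m.
Proof. by exists (ecs_index m); rewrite ?ecs_index_lt ?edge_target_in_edge. Qed.

Lemma ecs_edge_predE n m : ecs_edge S n m -> n = ecs_pred m.
Proof. by case=> i lt_i ->; apply: (congr1 fst (@in_edge_unique (n, i) lt_i)). Qed.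

Lemma weakly_connected_iter_pred x k : ecs_weakly_connected S x (iter k ecs_pred x).
Proof.
elim: k => [|k IH] /=; first exact: rst_refl.
by apply: rst_trans IH _; apply/rst_sym/rst_step/ecs_edge_pred.
Qed.

Lemma weakly_connected_iter_pred_meet x y :
  ecs_weakly_connected S x y -> exists k l, iter k ecs_pred x = iter l ecs_pred y.
Proof.
elim=> {x y} [x y /ecs_edge_predE -> | x | x y _ [k [l eq_kl]] |
              x y z _ [k [l eq_kl]] _ [k' [l' eq_kl']]].
- by exists 0, 1.
- by exists 0, 0.
- by exists l, k.
- exists (k' + k), (l + l').
  by rewrite iterD eq_kl -iterD addnC iterD eq_kl' -iterD.
Qed.

Lemma dicycle_fcycle c :
  is_dicycle S c <-> [/\ c <> [::], uniq c & fcycle pred_edge (rev c)].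
Proof.
split.
- case=> c_nil c_idx uniq_src /(_ _ _)/eqP c_next; split => //.
    exact: map_uniq uniq_src.
  rewrite rev_cycle.
  apply: (@sub_in_cycle _ [pred e | e.2 < size S] (fun e e' => edge_target S e == e'.1)).
  + move=> e e' /in_edge_unique e_in _ /eqP target_e /=.
    by apply/eqP; rewrite [RHS]e_in target_e.
  + exact: c_idx.
  + exact/(cycle_nthP (0%R, 0)).
- case=> c_nil uniq_c f_c.
  have uniq_rc : uniq (rev c) by rewrite rev_uniq.
  have c_in_edge e : e \in c -> e = in_edge (prev (rev c) e).1.
    rewrite -mem_rev => c_e.
    by rewrite -{1}(next_prev uniq_rc e) (nextE f_c) ?mem_prev.
  split => //.
  + by apply/allP => e /c_in_edge ->; apply: ecs_index_lt.
  + rewrite map_inj_in_uniq // => e e' c_e c_e' eq_src.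
    by apply: (inj_cycle f_c); rewrite ?mem_rev // /pred_edge eq_src.
  + have /cycle_nthP next_c : cycle (fun e e' => edge_target S e == e'.1) c.
      move: f_c; rewrite rev_cycle; apply: sub_cycle => e e' /eqP <-.
      by rewrite edge_target_in_edge.
    by move=> j /(next_c (0%R, 0))/eqP.
Qed.

Definition residue_bound : nat := \max_(c <- S) absz c.1.

Lemma abs_residue_le i : i < size S -> absz (nth (0, 0)%R S i).1 <= residue_bound.
Proof. by move=> lt_i; apply: leq_bigmax_seq => //; apply: mem_nth. Qed.

Section AtLeastTwoCongruences.

Hypothesis size_S_gt1 : 1 < size S.

Lemma abs_modulus_ge2 i : i < size S -> 2 <= absz (nth (0, 0)%R S i).2.
Proof.
move=> lt_i; rewrite leqNgt; apply/negP => lt_d2.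
have abs_d1 : absz (nth (0, 0)%R S i).2 = 1.
  by move: (modulus_neq0 lt_i) lt_d2; set d := (nth _ _ _).2; lia.
pose j := if i == 0 then 1 else 0.
have lt_j : j < size S by rewrite /j; case: (i == 0); lia.
have neq_ij : i != j by rewrite /j; case: (i =P 0) => [-> // | /eqP].
pose n := (nth (0, 0)%R S j).1.
have congr_i : congr_holds n (nth (0, 0)%R S i).
  by rewrite /congr_holds dvdzE abs_d1 dvd1n.
have congr_j : congr_holds n (nth (0, 0)%R S j) by rewrite /congr_holds subrr dvdz0.
move: neq_ij; rewrite (count_eq1_find (proj2 S_exact n) lt_i congr_i).
by rewrite (count_eq1_find (proj2 S_exact n) lt_j congr_j) eqxx.
Qed.

Lemma abs_ecs_pred_le m : 2 * absz (ecs_pred m) <= absz m + residue_bound.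
Proof.
have lt_i := ecs_index_lt m.
have := edge_target_in_edge m; rewrite /edge_target /=.
move: (abs_modulus_ge2 lt_i) (abs_residue_le lt_i).
set d := (nth _ _ _).2; set a := (nth _ _ _).1 => ge2_d le_a eq_m.
have : absz d * absz (ecs_pred m) = absz (m - a)%R.
  by rewrite -abszM -[in RHS]eq_m addrK.
have : 2 * absz (ecs_pred m) <= absz d * absz (ecs_pred m).
  by rewrite leq_mul2r ge2_d orbT.
lia.
Qed.

Lemma abs_iter_ecs_pred_le v k :
  absz (iter k ecs_pred v) <= maxn (absz v) residue_bound.
Proof.
elim: k => [|k IH] /=; first exact: leq_maxl.
by have := abs_ecs_pred_le (iter k ecs_pred v); lia.
Qed.

Lemma ecs_pred_orbit_repeats v :
  exists i j, i < j /\ iter i ecs_pred v = iter j ecs_pred v.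
Proof.
apply: bounded_int_orbit_repeats (maxn (absz v) residue_bound) _.
exact: abs_iter_ecs_pred_le.
Qed.

End AtLeastTwoCongruences.

End ExactCoveringDigraph.

Theorem mainTheorem5 (S : seq (int * int)) :
  (2 <= size S)%N -> exact_covering S ->
  forall v : int,
    exists c : seq (int * nat),
      [/\ is_dicycle S c,
          (forall e, e \in c -> ecs_weakly_connected S v e.1) &
          (forall c' : seq (int * nat), is_dicycle S c' ->
             (exists2 e, e \in c' & ecs_weakly_connected S v e.1) ->
             c' =i c)].
Proof.
move=> size_S exact_S v.
have [i [j [lt_ij eq_ij]]] := ecs_pred_orbit_repeats exact_S size_S v.
have : iter i (pred_edge S) (in_edge S v) = iter j (pred_edge S) (in_edge S v).
  by rewrite !iter_pred_edge eq_ij.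
case/(fcycle_of_orbit_repeat lt_ij) => p [p_nil uniq_p f_p p_i p_orbit].
exists (rev p); split.
- apply/(dicycle_fcycle exact_S); rewrite revK rev_uniq; split => //.
  by move/(congr1 rev); rewrite revK; apply: p_nil.
- move=> e; rewrite mem_rev => /p_orbit [k ->].
  by rewrite iter_pred_edge /= -iterS; apply: (weakly_connected_iter_pred exact_S).
- move=> c' /(dicycle_fcycle exact_S) [_ _ f_c'] [e c'_e].
  case/(weakly_connected_iter_pred_meet exact_S) => k [l eq_kl].
  set x := iter i (pred_edge S) (iter k (pred_edge S) (in_edge S v)).
  have p_x : x \in p by rewrite /x -iterD addnC iterD; apply: iter_mem_fcycle f_p p_i.
  have c'_x : x \in rev c'.
    rewrite /x iter_pred_edge eq_kl -iter_pred_edge -iterSr -iterD.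
    by apply: iter_mem_fcycle f_c' _; rewrite mem_rev.
  by move=> y; rewrite mem_rev (fcycle_eq_mem f_p f_c' p_x c'_x) mem_rev.
Qed.
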